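(* Under the hypotheses of Theorem 5.1 (odd composition ${\underline{\kappa}}$, $p\ge1$, partition $\Pi=(I_0,I^0_1,I^1_1,\dots,I^0_p,I^1_p)$ of $\{1,\dots,n\}$ into nonempty sets except that $I_0=\emptyset$ is allowed when $\ell({\underline{\kappa}})\ge3$, wall $W_\Pi=\{\sum_{i\in I^0_s}b_i=\sum_{j\in I^1_s}b_j,\ s=1..p\}$), let $G\in\mathcal{RG}^{{\underline{\kappa}},*}_{g,n}$ and let $e\in S(G)$ be a static edge whose forced weight $f_e$ vanishes identically on $W_\Pi$. Then $e$ is a bridge of $G$.
   Context: $\mathcal{RG}^{{\underline{\kappa}},*}_{g,n}$: connected ribbon graphs (cyclically ordered half-edges at vertices) of genus $g$ with $n$ labeled vertices and faces of odd degrees ${\underline{\kappa}}$. An edge $e$ is static if some connected component of $G-e$ is bipartite. For static $e$ with $I,J\subset\{1..n\}$ the labels of the two color classes of the bipartite component of $G-e$ ($e$ attached to class $I$), the forced weight is $f_e(\underline b)=\sum_{I}b_i-\sum_J b_j$ if $e$ is a bridge and $\tfrac12(\sum_Ib_i-\sum_Jb_j)$ otherwise; it equals $w(e)$ for any weight function $w$ with vertex perimeters $\underline b$. *)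

From mathcomp Require Import all_boot all_order all_fingroup all_algebra.
Set Warnings "-notation-overridden,-ambiguous-paths".
Set Implicit Arguments.
Unset Strict Implicit.
Unset Printing Implicit Defensive.
Import GRing.Theory Num.Theory.

(* A ribbon graph is encoded by a finite set of half-edges [H], a vertex
   rotation [sigma] (cycles = vertices, with cyclic order of half-edges), and a
   fixed-point-free involution [alpha] (orbits = edges).  Faces are the cycles
   of the face permutation sigma o alpha (in mathcomp, [(alpha * sigma)%g x =
   sigma (alpha x)]); the degree of a face is the length of its cycle.
   Vertices are labelled by [lab : H -> 'I_n]: half-edges get the same label iff
   they lie in the same sigma-cycle, and every label is used. *)

Section RibbonGraphs.
Variables (n : nat) (H : finType).

Definition face_perm (sigma alpha : {perm H}) : {perm H} := (alpha * sigma)%g.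

Definition face_degrees (sigma alpha : {perm H}) : seq nat :=
  map (fun O : {set H} => #|O|) (enum (porbits (face_perm sigma alpha))).

Definition hstep (sigma alpha : {perm H}) : rel H :=
  fun x y => (y == sigma x) || (y == alpha x).

Definition in_RG (kappa : seq nat) (g : nat) (sigma alpha : {perm H})
    (lab : H -> 'I_n) : Prop :=
  [/\ forall x, alpha (alpha x) = x /\ alpha x != x,
      (forall x y, (lab x == lab y) = (y \in porbit sigma x)) /\
      (forall v : 'I_n, exists x, lab x = v),
      forall x y, connect (hstep sigma alpha) x y,
      perm_eq (face_degrees sigma alpha) kappa &
      (n + #|porbits (face_perm sigma alpha)| + 2 * g = 2 + #|H| %/ 2)%N ].

(* Adjacency of (labelled) vertices in G - e, where e = {h, alpha h}. *)
Definition adj_minus (alpha : {perm H}) (lab : H -> 'I_n) (h : H) : rel 'I_n :=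
  fun u v => [exists x, [&& x != h, x != alpha h, lab x == u & lab (alpha x) == v]].

Definition is_bridge (alpha : {perm H}) (lab : H -> 'I_n) (h : H) : bool :=
  [exists u : 'I_n, exists v : 'I_n, ~~ connect (adj_minus alpha lab h) u v].

(* I, J are the two colour classes of a bipartite connected component of
   G - e, and e is attached to the class I.  The existence of such I, J is
   precisely the statement that e is static. *)
Definition static_data (alpha : {perm H}) (lab : H -> 'I_n) (h : H)
    (I J : {set 'I_n}) : Prop :=
  [/\ exists u, I :|: J = [set v | connect (adj_minus alpha lab h) u v],
      [disjoint I & J],
      forall u v, adj_minus alpha lab h u v ->
        ~~ ((u \in I) && (v \in I)) && ~~ ((u \in J) && (v \in J)) &
      (lab h \in I) || (lab (alpha h) \in I) ].

Definition is_static (alpha : {perm H}) (lab : H -> 'I_n) (h : H) : Prop :=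
  exists I J, static_data alpha lab h I J.

Definition forced_weight (R : realFieldType) (alpha : {perm H})
    (lab : H -> 'I_n) (h : H) (I J : {set 'I_n}) (b : 'I_n -> R) : R :=
  let d := (\sum_(i in I) b i - \sum_(j in J) b j)%R in
  if is_bridge alpha lab h then d else (d / 2%:R)%R.

End RibbonGraphs.

(* The partition Pi = (I_0, I^0_1, I^1_1, ..., I^0_p, I^1_p) of {1..n};
   [Ib s false] = I^0_s, [Ib s true] = I^1_s. *)
Definition is_Pi_partition (n p : nat) (kappa : seq nat) (I0 : {set 'I_n})
    (Ib : 'I_p -> bool -> {set 'I_n}) : Prop :=
  [/\ forall v, v \in I0 \/ exists s c, v \in Ib s c,
      forall s c, [disjoint I0 & Ib s c],
      forall s c s' c', (s, c) != (s', c') -> [disjoint Ib s c & Ib s' c'],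
      forall s c, Ib s c != set0 &
      I0 != set0 \/ (3 <= size kappa)%N ].

Definition in_wall (R : realFieldType) (n p : nat)
    (Ib : 'I_p -> bool -> {set 'I_n}) (b : 'I_n -> R) : Prop :=
  forall s, (\sum_(i in Ib s false) b i = \sum_(j in Ib s true) b j)%R.

From mathcomp Require Import all_boot all_order all_fingroup all_algebra.
From mathcomp Require Import lra.

Set Implicit Arguments.
Unset Strict Implicit.
Unset Printing Implicit Defensive.
Import GRing.Theory Num.Theory.

(* If e is not a bridge, the bipartite component of G - e is everything, so
   its colour classes I and J cover all vertices.  When I_0 contains a vertex
   v, the indicator of v lies on the wall but f_e takes the value +-1 or
   +-1/2 there.  Otherwise G has at least three faces; colouring half-edges by
   the class of their vertex, every edge other than e joins the two classes,
   so a face avoiding e alternates colours and has even degree.  As all face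
   degrees are odd, every face runs through a side of e, which leaves room for
   at most two faces. *)

Lemma alternating_porbit_even (T : finType) (s : {perm T}) (c : T -> bool) x :
  (forall y, y \in porbit s x -> c (s y) = ~~ c y) -> ~~ odd #|porbit s x|.
Proof.
move=> c_flip.
have c_iter k : c (iter k s x) = c x (+) odd k.
  elim: k => [|k IHk] /=; first by rewrite addbF.
  rewrite c_flip ?IHk; last by rewrite -permX mem_porbit.
  by case: (c x); case: (odd k).
by have := c_iter #|porbit s x|; rewrite iter_porbit; case: (c x); case: odd.
Qed.

Lemma card_porbits_le (T : finType) (s : {perm T}) (A : {set T}) :
  (forall x, exists2 y, y \in A & y \in porbit s x) -> #|porbits s| <= #|A|.
Proof.
move=> meetA; apply: leq_trans (leq_imset_card (porbit s) A).
apply: subset_leq_card; apply/subsetP => _ /imsetP [x _ ->].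
have [y yA y_x] := meetA x.
by apply/imsetP; exists y => //; apply/eqP; rewrite eq_porbit_mem porbit_sym.
Qed.

Lemma sum_delta (R : pzSemiRingType) (T : finType) (A : {pred T}) (v : T) :
  (\sum_(i in A) (i == v)%:R = (v \in A)%:R :> R)%R.
Proof.
case vA: (v \in A); last first.
  by rewrite big1 // => i iA; case: eqP iA => [-> | _]; rewrite ?vA.
by rewrite (bigD1 v) //= eqxx big1 ?addr0 // => i /andP [_ /negbTE ->].
Qed.

Section Bridges.
Variables (n : nat) (H : finType) (alpha : {perm H}) (lab : H -> 'I_n) (h : H).

Lemma not_bridge_connect :
  ~~ is_bridge alpha lab h -> forall u v, connect (adj_minus alpha lab h) u v.
Proof.
by move=> /existsPn nb u v; move/existsPn: (nb u) => /(_ v) /negbNE.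
Qed.

Lemma static_cover_not_bridge (I J : {set 'I_n}) :
  static_data alpha lab h I J -> ~~ is_bridge alpha lab h ->
  forall v, v \in I :|: J.
Proof.
move=> [[u ->] _ _ _] /not_bridge_connect conn v.
by rewrite inE conn.
Qed.

Lemma forced_weight_delta_neq0 (R : realFieldType) (I J : {set 'I_n}) v :
  [disjoint I & J] -> v \in I :|: J ->
  forced_weight alpha lab h I J (fun i => (i == v)%:R : R)%R != 0%R.
Proof.
rewrite /forced_weight !sum_delta => dIJ.
case/setUP => [vI | vJ].
  by rewrite vI (disjointFr dIJ vI) /=; case: ifP => _; apply: lt0r_neq0; lra.
by rewrite vJ (disjointFl dIJ vJ) /=; case: ifP => _; apply: ltr0_neq0; lra.
Qed.

End Bridges.

Lemma in_wall_delta (R : realFieldType) (n p : nat)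
    (Ib : 'I_p -> bool -> {set 'I_n}) v :
  (forall s c, v \notin Ib s c) -> in_wall Ib (fun i => (i == v)%:R : R)%R.
Proof. by move=> v_out s; rewrite !sum_delta !(negbTE (v_out _ _)). Qed.

Section StaticColouring.
Variables (n : nat) (H : finType) (sigma alpha : {perm H}) (lab : H -> 'I_n).
Variables (h : H) (I J : {set 'I_n}).
Hypothesis lab_sigma : forall x, lab (sigma x) = lab x.
Hypothesis cover : forall v, v \in I :|: J.
Hypothesis bipartite : forall u v, adj_minus alpha lab h u v ->
  ~~ ((u \in I) && (v \in I)) && ~~ ((u \in J) && (v \in J)).

Let phi := face_perm sigma alpha.

Lemma colour_alpha x : x != h -> x != alpha h ->
  (lab (alpha x) \in I) = (lab x \notin I).
Proof.
move=> xh xah.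
have adj : adj_minus alpha lab h (lab x) (lab (alpha x)).
  by apply/existsP; exists x; rewrite xh xah !eqxx.
move: (bipartite adj) (cover (lab x)) (cover (lab (alpha x))); rewrite !inE.
by case: (lab x \in I); case: (lab x \in J);
  case: (lab (alpha x) \in I); case: (lab (alpha x) \in J).
Qed.

Lemma colour_face_perm x : x != h -> x != alpha h ->
  (lab (phi x) \in I) = (lab x \notin I).
Proof. by move=> xh xah; rewrite /phi /face_perm permM lab_sigma colour_alpha. Qed.

Lemma odd_face_meets_edge x : odd #|porbit phi x| ->
  exists2 y, y \in [set h; alpha h] & y \in porbit phi x.
Proof.
move=> odd_face; apply/exists_inP; apply: contraLR odd_face.
rewrite negb_exists_in => /forall_inP avoid.
apply: (alternating_porbit_even (c := fun y => lab y \in I)) => y y_x.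
apply: colour_face_perm; apply: contraTneq y_x => ->.
  by apply: avoid; rewrite !inE eqxx.
by apply: avoid; rewrite !inE eqxx orbT.
Qed.

Lemma card_faces_le2 :
  {in face_degrees sigma alpha, forall d, odd d} -> #|porbits phi| <= 2.
Proof.
move=> odd_faces; apply: (@leq_trans #|[set h; alpha h]|).
  apply: card_porbits_le => x; apply: odd_face_meets_edge; apply: odd_faces.
  by apply/mapP; exists (porbit phi x); rewrite ?mem_enum ?imset_f.
by rewrite cards2 ltnS leq_b1.
Qed.

End StaticColouring.

Theorem lemma5p3 (kappa : seq nat) (g n p : nat) (H : finType)
    (sigma alpha : {perm H}) (lab : H -> 'I_n)
    (I0 : {set 'I_n}) (Ib : 'I_p -> bool -> {set 'I_n})
    (R : realFieldType) (h : H) :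
  all odd kappa ->
  (0 < p)%N ->
  is_Pi_partition kappa I0 Ib ->
  in_RG kappa g sigma alpha lab ->
  (exists I J : {set 'I_n}, static_data alpha lab h I J /\
     forall b : 'I_n -> R, in_wall Ib b ->
       forced_weight alpha lab h I J b = 0%R) ->
  is_bridge alpha lab h.
Proof.
move=> odd_kappa _ [_ I0_disj _ _ I0_or_3faces] [_ [lab_orbit _] _ faces _].
move=> [I [J [static f_wall0]]]; apply: contraT => not_bridge.
have cover := static_cover_not_bridge static not_bridge.
have [_ dIJ bipartite _] := static.
case: I0_or_3faces => [/set0Pn [v vI0] | three_faces].
  have wall_v : in_wall Ib (fun i => (i == v)%:R : R)%R.
    by apply: in_wall_delta => s c; rewrite (disjointFr (I0_disj s c) vI0).
  have := forced_weight_delta_neq0 alpha lab h R dIJ (cover v).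
  by rewrite f_wall0 ?eqxx.
have lab_sigma x : lab (sigma x) = lab x.
  by apply/eqP; rewrite eq_sym lab_orbit -{1}(expg1 sigma) mem_porbit.
have odd_faces : {in face_degrees sigma alpha, forall d, odd d}.
  by move=> d; rewrite (perm_mem faces); apply: (allP odd_kappa).
have := card_faces_le2 lab_sigma cover bipartite odd_faces.
rewrite -(perm_size faces) /face_degrees size_map -cardE in three_faces.
by move/(leq_trans three_faces).
Qed.
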